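(* Assume the setting of the context (in particular $\rho\ge0$, $r+\frac\rho2\ge1$, $p>1$, $c^2<c_1^2$). Then every $\Phi_c\in\mathcal{G}_c$ is a minimizer of $U\mapsto\mathcal{E}(U)+c\,\mathcal{M}(U)$ over $U=(u,w)\in X$ subject to the constraint $\mathcal{Q}(u)=2^{\frac{p+1}{p-1}}[m_1(c)]^{\frac{p+1}{p-1}}$.
   Context: $L$ and $B$ are Fourier multiplier operators on $\mathbb{R}$, $\widehat{Lu}=l\widehat u$, $\widehat{Bu}=b\widehat u$, with smooth real symbols of orders $\rho\ge0$ and $-r$, $r\ge0$, $r+\frac\rho2\ge1$; for all $k$, $\frac{d^k}{d\xi^k}l=O(|\xi|^{\rho-k})$, $\frac{d^k}{d\xi^k}b=O(|\xi|^{-r-k})$ as $|\xi|\to\infty$; and with best constants $c_i>0$, $c_1^2(1+\xi^2)^{\rho/2}\le l(\xi)\le c_2^2(1+\xi^2)^{\rho/2}$, $c_3^2(1+\xi^2)^{-r/2}\le b(\xi)\le c_4^2(1+\xi^2)^{-r/2}$. $L^{1/2}B^{-1/2}$, $B^{-1/2}$ have symbols $l^{1/2}b^{-1/2}$, $b^{-1/2}$. Let $s_0=\frac{r+\rho}2$, $X=H^{s_0}\times H^{s_0-\rho/2}$ (Sobolev spaces on $\mathbb{R}$), $p>1$. For $\psi\in H^{s_0}$: $\mathcal{I}_c(\psi)=\frac12\|L^{1/2}B^{-1/2}\psi\|_{L^2}^2-\frac{c^2}2\|B^{-1/2}\psi\|_{L^2}^2$, $\mathcal{Q}(\psi)=\int|\psi|^{p+1}dx$,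 and $m_1(c)=\inf\{\mathcal{I}_c(\psi):\psi\in H^{s_0},\mathcal{Q}(\psi)=1\}$. For $U=(u,w)\in X$: $\mathcal{E}(U)=\frac12\|B^{-1/2}w\|_{L^2}^2+\frac12\|L^{1/2}B^{-1/2}u\|_{L^2}^2-\frac1{p+1}\|u\|_{L^{p+1}}^{p+1}$ and $\mathcal{M}(U)=\int(B^{-1/2}u)(B^{-1/2}w)dx$. Let $G_c=\{[2m_1(c)]^{1/(p-1)}\psi:\ \psi\in H^{s_0},\ \mathcal{Q}(\psi)=1,\ \mathcal{I}_c(\psi)=m_1(c)\}$ (the traveling wave profiles of speed $c$ for $u_{tt}-Lu_{xx}=-B(|u|^{p-1}u)_{xx}$), and $\mathcal{G}_c=\{(\phi,-c\phi):\phi\in G_c\}\subset X$. *)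

From HB Require Import structures.
From mathcomp Require Import all_boot all_order all_algebra.
From mathcomp Require Import all_classical all_reals all_analysis.
Set Implicit Arguments. Unset Strict Implicit. Unset Printing Implicit Defensive.
Import Order.TTheory GRing.Theory Num.Theory.
Import numFieldNormedType.Exports.
Local Open Scope classical_set_scope.
Local Open Scope ring_scope.

Section Defs.
Variable R : realType.
Local Notation mu := (@lebesgue_measure R).

Definition Rint (f : R -> R) : R := Rintegral mu setT f.

Definition L2 (u : R -> R) : Prop :=
  measurable_fun setT u /\ mu.-integrable setT (fun x => (u x ^+ 2)%:E).

(* Fourier transform truncated to [-N,N]:  F_N(xi) = int_{-N}^{N} e^{-i x xi} u(x) dx,
   split into real and imaginary parts *)
Definition FTN_re (u : R -> R) (N : nat) (xi : R) : R :=
  Rintegral mu `[- N%:R, N%:R] (fun x => u x * cos (x * xi)).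
Definition FTN_im (u : R -> R) (N : nat) (xi : R) : R :=
  Rintegral mu `[- N%:R, N%:R] (fun x => - (u x * sin (x * xi))).

(* (a, b) = (Re uhat, Im uhat) is the Fourier–Plancherel transform of u in L^2:
   uhat = L^2-lim_{N -> oo} F_N *)
Definition is_FT (u : R -> R) (ab : (R -> R) * (R -> R)) : Prop :=
  L2 u /\ L2 ab.1 /\ L2 ab.2 /\
  (fun N : nat => (\int[mu]_xi
      (((FTN_re u N xi - ab.1 xi) ^+ 2 + (FTN_im u N xi - ab.2 xi) ^+ 2)%:E))%E)
    @ \oo --> 0%E.

(* a chosen version of the Fourier transform (unique a.e. when it exists) *)
Definition FTre (u : R -> R) : R -> R := (get (is_FT u)).1.
Definition FTim (u : R -> R) : R -> R := (get (is_FT u)).2.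

Definition FTsq (u : R -> R) (xi : R) : R := FTre u xi ^+ 2 + FTim u xi ^+ 2.

Definition H (s : R) (u : R -> R) : Prop :=
  (exists ab, is_FT u ab) /\
  mu.-integrable setT (fun xi => ((1 + xi ^+ 2) `^ s * FTsq u xi)%:E).

(* ||T u||_{L^2}^2 for the Fourier multiplier T with symbol m,
   via Plancherel: (1/2pi) int |m|^2 |uhat|^2 *)
Definition mult_norm2 (m : R -> R) (u : R -> R) : R :=
  (2 * pi)^-1 * Rint (fun xi => m xi ^+ 2 * FTsq u xi).

(* int (T1 u)(T2 w) dx for real multipliers, via Parseval:
   (1/2pi) int m1 m2 Re(uhat conj(what)) *)
Definition mult_pair (m1 m2 : R -> R) (u w : R -> R) : R :=
  (2 * pi)^-1 * Rint (fun xi => m1 xi * m2 xi *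
                        (FTre u xi * FTre w xi + FTim u xi * FTim w xi)).

(* symbols of L^{1/2} B^{-1/2} and B^{-1/2} *)
Definition symLB (l b : R -> R) (xi : R) : R := Num.sqrt (l xi) / Num.sqrt (b xi).
Definition symB (b : R -> R) (xi : R) : R := (Num.sqrt (b xi))^-1.

Definition Qf (p : R) (psi : R -> R) : R := Rint (fun x => `|psi x| `^ (p + 1)).

Definition Ic (l b : R -> R) (c : R) (psi : R -> R) : R :=
  2^-1 * mult_norm2 (symLB l b) psi - c ^+ 2 / 2 * mult_norm2 (symB b) psi.

Definition s0 (r rho : R) : R := (r + rho) / 2.

Definition m1 (l b : R -> R) (r rho p c : R) : R :=
  inf [set Ic l b c psi | psi in [set psi | H (s0 r rho) psi /\ Qf p psi = 1]].

Definition inX (r rho : R) (U : (R -> R) * (R -> R)) : Prop :=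
  H (s0 r rho) U.1 /\ H (s0 r rho - rho / 2) U.2.

Definition Ef (l b : R -> R) (p : R) (U : (R -> R) * (R -> R)) : R :=
  2^-1 * mult_norm2 (symB b) U.2 + 2^-1 * mult_norm2 (symLB l b) U.1
  - (p + 1)^-1 * Rint (fun x => `|U.1 x| `^ (p + 1)).

Definition Mf (b : R -> R) (U : (R -> R) * (R -> R)) : R :=
  mult_pair (symB b) (symB b) U.1 U.2.

Definition Gc (l b : R -> R) (r rho p c : R) : set (R -> R) :=
  [set phi | exists psi, [/\ H (s0 r rho) psi, Qf p psi = 1,
     Ic l b c psi = m1 l b r rho p c &
     phi = (fun x => (2 * m1 l b r rho p c) `^ (p - 1)^-1 * psi x)]].

Definition calGc (l b : R -> R) (r rho p c : R) : set ((R -> R) * (R -> R)) :=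
  [set Phi | exists2 phi, Gc l b r rho p c phi & Phi = (phi, fun x => - c * phi x)].

Definition symbol_of_order (f : R -> R) (ord : R) : Prop :=
  (forall (k : nat) (x : R), derivable (derive1n k f) x 1) /\
  (forall k : nat, exists C M : R, 0 < M /\
     forall xi, M <= `|xi| -> `|derive1n k f xi| <= C * `|xi| `^ (ord - k%:R)).

Definition best_lower (f w : R -> R) (cl : R) : Prop :=
  0 < cl /\ (forall xi, cl ^+ 2 * w xi <= f xi) /\
  (forall d, (forall xi, d * w xi <= f xi) -> d <= cl ^+ 2).
Definition best_upper (f w : R -> R) (ch : R) : Prop :=
  0 < ch /\ (forall xi, f xi <= ch ^+ 2 * w xi) /\
  (forall d, (forall xi, f xi <= d * w xi) -> ch ^+ 2 <= d).

End Defs.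

From Pilot Require Import Defs.
From HB Require Import structures.
From mathcomp Require Import all_boot all_order all_algebra.
From mathcomp Require Import all_classical all_reals all_analysis.
From mathcomp Require Import measurable_realfun ring lra.
Set Implicit Arguments. Unset Strict Implicit. Unset Printing Implicit Defensive.
Import Order.TTheory GRing.Theory Num.Theory.
Import numFieldNormedType.Exports.
Local Open Scope classical_set_scope.
Local Open Scope ring_scope.

(* Completing the square on the Fourier side,
     E(u, w) + c M(u, w) = I_c(u) - Q(u)/(p+1) + (1/4pi) int b^-1 |w^ + c u^|^2,
   so E + c M is bounded below by I_c(u) - Q(u)/(p+1), with equality for w = -c u.
   On the constraint Q(u) = K^(p+1), K = (2 m_1(c))^(1/(p-1)), the rescaled u/K competes
   in the definition of m_1(c); as I_c is 2-homogeneous this gives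
   I_c(u) >= K^2 m_1(c) = I_c(phi) for the ground states phi = K psi.  The assumption
   c^2 < c1^2 makes the symbol (l - c^2)/b of I_c nonnegative.  Since the Fourier
   transform is only determined almost everywhere, the homogeneity of I_c rests on the
   uniqueness of the L^2 limit defining it. *)

Lemma sqr_subr_le2 (R : realDomainType) (a a' x : R) :
  (a - a') ^+ 2 <= 2 * (x - a) ^+ 2 + 2 * (x - a') ^+ 2.
Proof. have := sqr_ge0 (2 * x - a - a'); nra. Qed.

Lemma normr_dot_le (R : realDomainType) (A B C D : R) :
  `|A * C + B * D| <= A ^+ 2 + B ^+ 2 + (C ^+ 2 + D ^+ 2).
Proof.
rewrite ler_norml; apply/andP; split.
  have := sqr_ge0 (A + C); have := sqr_ge0 (B + D); rewrite !sqrrD; nra.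
have := sqr_ge0 (A - C); have := sqr_ge0 (B - D); rewrite !sqrrB; nra.
Qed.

(* The next two identities are stated over abstract atoms: [ring] run directly on the
   integrals would try to unfold the [get]-defined Fourier transforms to compare them. *)
Lemma complete_square (F : numFieldType) (c a Iw Ilb Idot Iu q Q Y : F) :
  Y = Iw + 2 * c * Idot + c ^+ 2 * Iu ->
  2^-1 * (a * Iw) + 2^-1 * (a * Ilb) - q * Q + c * (a * Idot) =
  2^-1 * (a * Ilb) - c ^+ 2 / 2 * (a * Iu) - q * Q + a / 2 * Y.
Proof. by move=> ->; field. Qed.

Lemma scale_difference (F : comUnitRingType) (a d K X X' Y Y' : F) :
  X' = K * X -> Y' = K * Y ->
  2^-1 * (a * X') - d * (a * Y') = K * (2^-1 * (a * X) - d * (a * Y)).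
Proof. by move=> -> ->; ring. Qed.

Section integral_facts.
Context d (T : measurableType d) (R : realType) (mu : {measure set T -> \bar R}).

Lemma ge0_integral_le0_ae_eq0 (h : T -> R) : measurable_fun setT h ->
  (forall x, 0 <= h x) -> (\int[mu]_x (h x)%:E <= 0)%E -> ae_eq mu setT h (cst 0).
Proof.
move=> mh h0 le0.
have : (\int[mu]_x `|(h x)%:E| = 0)%E.
  under eq_integral => x _ do rewrite gee0_abs ?lee_fin//.
  by apply/eqP; rewrite eq_le le0 integral_ge0// => x _; rewrite lee_fin.
have mhE : measurable_fun setT (EFin \o h) by exact/measurable_EFinP.
move=> /(ae_eq_integral_abs mu measurableT mhE).
by apply: filterS => x /[apply] -[].
Qed.

Lemma Rintegral_ae_eq (f g : T -> R) : measurable_fun setT f -> measurable_fun setT g ->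
  ae_eq mu setT f g -> Rintegral mu setT f = Rintegral mu setT g.
Proof.
move=> mf mg fg; congr fine.
apply: ae_eq_integral => //; try exact/measurable_EFinP.
by apply: filterS fg => x /= e Tx; rewrite e.
Qed.

Lemma integrable_ae_eq (f g : T -> R) : measurable_fun setT g -> ae_eq mu setT f g ->
  mu.-integrable setT (EFin \o f) -> mu.-integrable setT (EFin \o g).
Proof.
move=> mg fg /integrableP[mf fi]; apply/integrableP; split; first exact/measurable_EFinP.
rewrite (_ : (\int[mu]_x `|(EFin \o g) x|)%E = (\int[mu]_x `|(EFin \o f) x|)%E)//.
apply: ae_eq_integral => //; [exact/measurableT_comp/measurable_EFinP|exact: measurableT_comp|].
by apply: filterS fg => x /= e Tx; rewrite e.
Qed.

Lemma integrableZl_EFin (D : set T) (f : T -> R) (k : R) : measurable D ->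
  mu.-integrable D (EFin \o f) -> mu.-integrable D (EFin \o (fun x => k * f x)).
Proof.
move=> mD fi; rewrite (_ : EFin \o _ = (fun x => k%:E * (EFin \o f) x)%E).
  exact: integrableZl.
by apply/funext => x.
Qed.

Lemma integrableD_EFin (D : set T) (f g : T -> R) : measurable D ->
  mu.-integrable D (EFin \o f) -> mu.-integrable D (EFin \o g) ->
  mu.-integrable D (EFin \o (fun x => f x + g x)).
Proof.
move=> mD fi gi; rewrite (_ : EFin \o _ = (EFin \o f) \+ (EFin \o g))%E.
  exact: integrableD.
by apply/funext => x.
Qed.

(* [Rintegral] is [0] on non-integrable functions, so the case of an infinite integral
   needs [k * +oo = +oo] for [k > 0]. *)
Lemma ge0_RintegralZl (f : T -> R) (k : R) : measurable_fun setT f ->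
  (forall x, 0 <= f x) -> 0 <= k -> Rintegral mu setT (fun x => k * f x) = k * Rintegral mu setT f.
Proof.
move=> mf f0 k0; rewrite /Rintegral.
under eq_integral do rewrite EFinM.
rewrite ge0_integralZl_EFin//; last 2 first.
- by move=> x _; rewrite lee_fin.
- exact/measurable_EFinP.
have : (0 <= \int[mu]_x (f x)%:E)%E by apply: integral_ge0 => x _; rewrite lee_fin.
case: (\int[mu]_x (f x)%:E)%E => [y| |] //= _.
have [->|k_neq0] := eqVneq k 0; first by rewrite mul0e mul0r.
by rewrite mulry gtr0_sg ?lt_neqAle 1?eq_sym ?k_neq0// mul1e mulr0.
Qed.

End integral_facts.

Definition FTN_kern (R : realType) (t u : R -> R) (N : nat) (xi : R) : R :=
  \int[@lebesgue_measure R]_(x in `[- N%:R, N%:R]) (u x * t (x * xi)).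

Definition FT_err (R : realType) (u : R -> R) (ab : (R -> R) * (R -> R)) (N : nat) (xi : R) :=
  (FTN_re u N xi - ab.1 xi) ^+ 2 + (FTN_im u N xi - ab.2 xi) ^+ 2.

Section truncated_transform.
Context {R : realType}.
Local Notation mu := (@lebesgue_measure R).

Lemma L2_measurable (u : R -> R) : L2 u -> measurable_fun setT u.
Proof. by case. Qed.

(* [|u| <= 1 + u^2] and bounded intervals have finite measure. *)
Lemma L2_integrable_itv (u : R -> R) (N : nat) : L2 u ->
  mu.-integrable `[- N%:R, N%:R] (EFin \o u).
Proof.
move=> [mu_ iu].
apply: (@le_integrable _ _ _ mu _ _ _ (fun x => (1 + u x ^+ 2)%:E)) => //.
- by apply/measurable_EFinP; exact: measurable_funS mu_.
- move=> x _ /=; rewrite lee_fin [X in _ <= X]ger0_norm ?addr_ge0 ?sqr_ge0//.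
  rewrite -real_normK ?num_real//; have := normr_ge0 (u x).
  move: `|u x| => y y0; have := sqr_ge0 (y - 1); nra.
- apply: (@integrableD _ _ _ mu _ _ (cst 1%:E) (fun x => (u x ^+ 2)%:E)) => //.
    apply/integrableP; split => //; rewrite integral_cst//= normr1 mul1e.
    by rewrite lebesgue_measure_itv/= lte_fin; case: ifP => _; rewrite ?ltry.
  exact: integrableS iu.
Qed.

Lemma L2_scale (u : R -> R) k : L2 u -> L2 (fun x => k * u x).
Proof.
move=> [mu_ iu]; split; first exact: measurable_funM.
under eq_fun do rewrite exprMn EFinM.
exact: integrableZl.
Qed.

Section kernel.
Variable t : R -> R.
Hypotheses (t_cont : continuous t) (t_le1 : forall z, `|t z| <= 1).

Lemma integrable_itv_kern (u : R -> R) N xi : L2 u ->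
  mu.-integrable `[- N%:R, N%:R] (EFin \o (fun x => u x * t (x * xi))).
Proof.
move=> uL2; apply: (le_integrable _ _ _ (integrable_norm (L2_integrable_itv N uL2))) => //.
  apply/measurable_EFinP/measurable_funM; first exact: measurable_funS (L2_measurable uL2).
  apply: measurableT_comp; first exact: continuous_measurable_fun.
  exact: measurable_funM.
move=> y _ /=; rewrite lee_fin normr_id normrM.
by rewrite -[X in _ <= X]mulr1 ler_wpM2l.
Qed.

Lemma continuous_FTN_kern (u : R -> R) N : L2 u -> continuous (FTN_kern t u N).
Proof.
move=> uL2 xi.
have := @continuity_under_integral R _ _ mu (fun xi x => u x * t (x * xi))
  `[- N%:R, N%:R] (measurable_itv _) (xi - 1) (xi + 1); apply.
- by move=> ? _; exact: integrable_itv_kern.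
- apply: aeW => y _ z _.
  apply: (@continuousM R R (cst (u y)) (fun z => t (y * z))); first exact: cst_continuous.
  apply: continuous_comp; last exact: t_cont.
  by apply: (@continuousM R R (cst y) id); [exact: cst_continuous|exact: cvg_id].
- exact: integrable_norm (L2_integrable_itv N uL2).
- move=> ? _; apply: aeW => y _ /=.
  by rewrite normrM -[X in _ <= X]mulr1 ler_wpM2l.
- by rewrite inE /= in_itv /=; apply/andP; split; lra.
Qed.

Lemma FTN_kernZ (u : R -> R) N k xi : L2 u ->
  FTN_kern t (fun x => k * u x) N xi = k * FTN_kern t u N xi.
Proof.
move=> uL2; rewrite /FTN_kern -RintegralZl//; last exact: integrable_itv_kern.
by apply: eq_Rintegral => x _; rewrite mulrA.
Qed.

End kernel.

Lemma FTN_reE (u : R -> R) N : FTN_re u N = FTN_kern cos u N.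
Proof. by []. Qed.

Lemma FTN_imE (u : R -> R) N : FTN_im u N = FTN_kern (fun z => - sin z) u N.
Proof. by apply/funext => xi; apply: eq_Rintegral => x _; rewrite mulrN. Qed.

Lemma continuous_Nsin : continuous (fun z : R => - sin z).
Proof. by move=> z; apply: continuousN; exact: continuous_sin. Qed.

Lemma normNsin_le1 (z : R) : `|- sin z| <= 1.
Proof. by rewrite normrN sin_max. Qed.

Lemma measurable_FTN_re (u : R -> R) N : L2 u -> measurable_fun setT (FTN_re u N).
Proof.
move=> uL2; rewrite FTN_reE; apply: continuous_measurable_fun.
by apply: continuous_FTN_kern => //; [exact: continuous_cos|exact: cos_max].
Qed.

Lemma measurable_FTN_im (u : R -> R) N : L2 u -> measurable_fun setT (FTN_im u N).
Proof.
move=> uL2; rewrite FTN_imE; apply: continuous_measurable_fun.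
by apply: continuous_FTN_kern => //; [exact: continuous_Nsin|exact: normNsin_le1].
Qed.

Lemma FTN_reZ (u : R -> R) N k xi : L2 u ->
  FTN_re (fun x => k * u x) N xi = k * FTN_re u N xi.
Proof.
by move=> uL2; rewrite !FTN_reE FTN_kernZ//; do ?[exact: continuous_cos|exact: cos_max].
Qed.

Lemma FTN_imZ (u : R -> R) N k xi : L2 u ->
  FTN_im (fun x => k * u x) N xi = k * FTN_im u N xi.
Proof.
by move=> uL2; rewrite !FTN_imE FTN_kernZ//;
  do ?[exact: continuous_Nsin|exact: normNsin_le1].
Qed.

End truncated_transform.

Section Fourier_transform.
Context {R : realType}.
Local Notation mu := (@lebesgue_measure R).

Lemma is_FTP (u : R -> R) ab : is_FT u ab <->
  [/\ L2 u, L2 ab.1, L2 ab.2 &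
      (fun N => \int[mu]_xi (FT_err u ab N xi)%:E)%E @ \oo --> 0%E].
Proof. by split => [[? [? [? ?]]]|[]]. Qed.

Lemma measurable_FT_err (u : R -> R) ab N : is_FT u ab -> measurable_fun setT (FT_err u ab N).
Proof.
move=> /is_FTP[uL2 [ma _] [mb _] _].
apply: measurable_funD; apply: measurable_funX; apply: measurable_funB => //.
- exact: measurable_FTN_re.
- exact: measurable_FTN_im.
Qed.

(* Both candidate transforms are L^2-limits of the same sequence, so their distance,
   bounded through [sqr_subr_le2] by the two errors, has zero integral. *)
Lemma FT_unique (u : R -> R) ab ab' : is_FT u ab -> is_FT u ab' ->
  ae_eq mu setT ab.1 ab'.1 /\ ae_eq mu setT ab.2 ab'.2.
Proof.
move=> FTab FTab'.
have /is_FTP[_ [ma _] [mb _] err0] := FTab.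
have /is_FTP[_ [ma' _] [mb' _] err0'] := FTab'.
pose h xi := (ab.1 xi - ab'.1 xi) ^+ 2 + (ab.2 xi - ab'.2 xi) ^+ 2.
have mh : measurable_fun setT h.
  by apply: measurable_funD; apply: measurable_funX; apply: measurable_funB.
have err_ge0 v N x : (0 <= (FT_err u v N x)%:E)%E by rewrite lee_fin addr_ge0 ?sqr_ge0.
have mErr v N : is_FT u v -> measurable_fun setT (fun x => (FT_err u v N x)%:E).
  by move=> /(measurable_FT_err N) /measurable_EFinP.
have h_le N : (\int[mu]_xi (h xi)%:E <= 2%:E * \int[mu]_xi (FT_err u ab N xi)%:E
                                     + 2%:E * \int[mu]_xi (FT_err u ab' N xi)%:E)%E.
  have mE := mErr _ N FTab; have mE' := mErr _ N FTab'.
  rewrite -!ge0_integralZl// -ge0_integralD//; last 4 first.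
  - by move=> x _; rewrite mule_ge0.
  - exact: measurable_funeM mE.
  - by move=> x _; rewrite mule_ge0.
  - exact: measurable_funeM mE'.
  apply: ge0_le_integral => //.
  - by move=> x _; rewrite lee_fin addr_ge0 ?sqr_ge0.
  - exact/measurable_EFinP.
  - by apply: emeasurable_funD; exact: measurable_funeM.
  move=> x _; rewrite -!EFinM -EFinD lee_fin /h /FT_err.
  have := sqr_subr_le2 (ab.1 x) (ab'.1 x) (FTN_re u N x).
  have := sqr_subr_le2 (ab.2 x) (ab'.2 x) (FTN_im u N x).
  lra.
have bound0 : ((fun N => 2%:E * \int[mu]_xi (FT_err u ab N xi)%:E
                  + 2%:E * \int[mu]_xi (FT_err u ab' N xi)%:E) @ \oo --> 0)%E.
  by rewrite -[0%E](adde0 0) -{1 2}[0%E](mule0 2%:E); apply: cvgeD => //; apply: cvgeZl.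
have h_le0 : (\int[mu]_xi (h xi)%:E <= 0)%E.
  rewrite -(cvg_lim _ bound0)//; apply: lime_ge; first by apply/cvg_ex; exists 0%E.
  exact: nearW.
have h0 := ge0_integral_le0_ae_eq0 (mu := mu) mh (fun x => addr_ge0 (sqr_ge0 _) (sqr_ge0 _)) h_le0.
have eq_of_h0 x : h x = 0 -> ab.1 x = ab'.1 x /\ ab.2 x = ab'.2 x.
  move=> /eqP; rewrite paddr_eq0 ?sqr_ge0// !sqrf_eq0 !subr_eq0.
  by move=> /andP[/eqP ? /eqP ?].
by split; apply: filterS h0 => x /[apply] /eq_of_h0[].
Qed.

Lemma FT_scale (u : R -> R) ab k : is_FT u ab ->
  is_FT (fun x => k * u x) ((fun xi => k * ab.1 xi), (fun xi => k * ab.2 xi)).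
Proof.
move=> FTab; have /is_FTP[uL2 aL2 bL2 err0] := FTab.
apply/is_FTP; split; try exact: L2_scale.
have errZ N : (\int[mu]_xi (FT_err (fun x => k * u x)
    ((fun xi => k * ab.1 xi), (fun xi => k * ab.2 xi)) N xi)%:E
  = (k ^+ 2)%:E * \int[mu]_xi (FT_err u ab N xi)%:E)%E.
  rewrite -ge0_integralZl_EFin ?sqr_ge0//; last 2 first.
  - by move=> x _; rewrite lee_fin addr_ge0 ?sqr_ge0.
  - by apply/measurable_EFinP; exact: measurable_FT_err.
  apply: eq_integral => xi _; rewrite -EFinM /FT_err /= FTN_reZ// FTN_imZ//.
  by rewrite -!mulrBr !exprMn mulrDr.
rewrite (funext errZ) -[0%E](mule0 (k ^+ 2)%:E).
exact: cvgeZl.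
Qed.

Lemma FT_get (u : R -> R) : (exists ab, is_FT u ab) -> is_FT u (FTre u, FTim u).
Proof. by move=> /getPex; rewrite /FTre /FTim -surjective_pairing. Qed.

Lemma measurable_FTre (u : R -> R) : (exists ab, is_FT u ab) -> measurable_fun setT (FTre u).
Proof. by move=> /FT_get [_ [[] ]]. Qed.

Lemma measurable_FTim (u : R -> R) : (exists ab, is_FT u ab) -> measurable_fun setT (FTim u).
Proof. by move=> /FT_get [_ [_ [[]]]]. Qed.

Lemma measurable_FTsq (u : R -> R) : (exists ab, is_FT u ab) -> measurable_fun setT (FTsq u).
Proof.
move=> uFT; apply: measurable_funD; apply: measurable_funX.
  exact: measurable_FTre.
exact: measurable_FTim.
Qed.

Lemma FTsq_ge0 (u : R -> R) xi : 0 <= FTsq u xi.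
Proof. by rewrite addr_ge0 ?sqr_ge0. Qed.

Lemma FT_scale_ae (u : R -> R) k : (exists ab, is_FT u ab) ->
  ae_eq mu setT (FTre (fun x => k * u x)) (fun xi => k * FTre u xi) /\
  ae_eq mu setT (FTim (fun x => k * u x)) (fun xi => k * FTim u xi).
Proof.
move=> /FT_get/(FT_scale k) kuFT.
exact: FT_unique (FT_get (ex_intro _ _ kuFT)) kuFT.
Qed.

Lemma FTsq_scale_ae (u : R -> R) k : (exists ab, is_FT u ab) ->
  ae_eq mu setT (FTsq (fun x => k * u x)) (fun xi => k ^+ 2 * FTsq u xi).
Proof.
move=> /(FT_scale_ae k) [reE imE]; apply: filterS2 reE imE => x e1 e2 /= _.
by rewrite /FTsq e1// e2// !exprMn mulrDr.
Qed.

Lemma Rint_mul_FTsqZ (g u : R -> R) (k : R) : measurable_fun setT g ->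
  (exists ab, is_FT u ab) -> mu.-integrable setT (EFin \o (fun xi => g xi * FTsq u xi)) ->
  Defs.Rint (fun xi => g xi * FTsq (fun x => k * u x) xi) =
  k ^+ 2 * Defs.Rint (fun xi => g xi * FTsq u xi).
Proof.
move=> mg uFT gu_int; rewrite /Defs.Rint -RintegralZl//.
apply: Rintegral_ae_eq.
- apply: measurable_funM mg (measurable_FTsq _).
  by case: uFT => ab /(FT_scale k) kuFT; eexists; exact: kuFT.
- by apply: measurable_funM => //; exact: measurable_funM mg (measurable_FTsq uFT).
by apply: filterS (FTsq_scale_ae k uFT) => x /= e _; rewrite e// mulrCA.
Qed.

Lemma Qf_scale (p : R) (u : R -> R) (k : R) : measurable_fun setT u ->
  Qf p (fun x => k * u x) = `|k| `^ (p + 1) * Qf p u.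
Proof.
move=> mu_; rewrite /Qf /Defs.Rint.
under eq_Rintegral do rewrite normrM powRM//.
apply: ge0_RintegralZl; [|by move=> x; exact: powR_ge0|exact: powR_ge0].
apply: (measurableT_comp (measurable_powR _)).
exact: (measurableT_comp (@normr_measurable _ _) mu_).
Qed.

End Fourier_transform.

Section Sobolev.
Context {R : realType}.
Local Notation mu := (@lebesgue_measure R).

Lemma measurable_weight (s : R) : measurable_fun setT (fun xi : R => (1 + xi ^+ 2) `^ s).
Proof.
apply: (measurableT_comp (measurable_powR s)).
by apply: measurable_funD => //; apply: measurable_funX.
Qed.

Lemma weight_le (s s' xi : R) : s' <= s -> (1 + xi ^+ 2) `^ s' <= (1 + xi ^+ 2) `^ s.
Proof. by apply: ler_powR; rewrite lerDl sqr_ge0. Qed.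

Lemma weight_ge1 (s xi : R) : 0 <= s -> 1 <= (1 + xi ^+ 2) `^ s.
Proof. by move=> /(weight_le xi); rewrite powRr0. Qed.

Lemma H_FT (s : R) (u : R -> R) : H s u -> exists ab, is_FT u ab.
Proof. by case. Qed.

Lemma H_measurable (s : R) (u : R -> R) : H s u -> measurable_fun setT u.
Proof. by move=> [[ab [[]]]]. Qed.

Lemma integrable_mul_FTsq (g : R -> R) (s C : R) (u : R -> R) : measurable_fun setT g ->
  (forall xi, 0 <= g xi <= C * (1 + xi ^+ 2) `^ s) -> H s u ->
  mu.-integrable setT (EFin \o (fun xi => g xi * FTsq u xi)).
Proof.
move=> mg gC [uFT u_int].
apply: (le_integrable _ _ _ (integrableZl_EFin (mu := mu)
  (f := fun xi => (1 + xi ^+ 2) `^ s * FTsq u xi) C measurableT u_int)) => //.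
  by apply/measurable_EFinP; exact: measurable_funM mg (measurable_FTsq uFT).
move=> xi _ /=; have /andP[g0 gle] := gC xi.
rewrite lee_fin ger0_norm ?mulr_ge0 ?FTsq_ge0//; apply: le_trans (ler_norm _).
by rewrite mulrA ler_wpM2r ?FTsq_ge0.
Qed.

Lemma H_le (s s' : R) (u : R -> R) : s' <= s -> H s u -> H s' u.
Proof.
move=> s's uH; split; first exact: H_FT uH.
apply: (integrable_mul_FTsq (C := 1) (measurable_weight s') _ uH) => xi.
by rewrite powR_ge0 mul1r weight_le.
Qed.

Lemma H_scale (s : R) (u : R -> R) k : H s u -> H s (fun x => k * u x).
Proof.
move=> [[ab FTab] u_int]; have uFT : exists ab, is_FT u ab by exists ab.
split; first by eexists; exact: (FT_scale k FTab).
apply: (integrable_ae_eq (mu := mu) (f := fun xi => k ^+ 2 * ((1 + xi ^+ 2) `^ s * FTsq u xi))).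
- apply: measurable_funM; first exact: measurable_weight.
  by apply: measurable_FTsq; eexists; exact: (FT_scale k FTab).
- by apply: filterS (FTsq_scale_ae k uFT) => x /= e _; rewrite e// mulrCA.
- exact: (integrableZl_EFin (mu := mu)
    (f := fun xi => (1 + xi ^+ 2) `^ s * FTsq u xi) _ measurableT).
Qed.

End Sobolev.

Lemma continuous_symbol (R : realType) (f : R -> R) (o : R) :
  symbol_of_order f o -> continuous f.
Proof.
move=> [fD _] x; have := fD 0%N x; rewrite derive1n0 => /derivable1_diffP.
exact: differentiable_continuous.
Qed.

Section traveling_waves.
Context {R : realType}.
Local Notation mu := (@lebesgue_measure R).
Variables (l b : R -> R) (rho r c c1 c2 c3 : R).
Hypotheses (rho_ge0 : 0 <= rho) (l_cont : continuous l) (b_cont : continuous b).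
Hypotheses (c1_gt0 : 0 < c1) (l_lb : forall xi, c1 ^+ 2 * (1 + xi ^+ 2) `^ (rho / 2) <= l xi).
Hypothesis l_ub : forall xi, l xi <= c2 ^+ 2 * (1 + xi ^+ 2) `^ (rho / 2).
Hypotheses (c3_gt0 : 0 < c3) (b_lb : forall xi, c3 ^+ 2 * (1 + xi ^+ 2) `^ (- r / 2) <= b xi).
Hypothesis c_lt_c1 : c ^+ 2 < c1 ^+ 2.

Lemma b_gt0 xi : 0 < b xi.
Proof.
by apply: lt_le_trans (b_lb xi); rewrite mulr_gt0 ?exprn_gt0 ?powR_gt0// ltr_wpDr ?sqr_ge0.
Qed.

Lemma l_gt0 xi : 0 < l xi.
Proof.
by apply: lt_le_trans (l_lb xi); rewrite mulr_gt0 ?exprn_gt0 ?powR_gt0// ltr_wpDr ?sqr_ge0.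
Qed.

Lemma binv_ge0 xi : 0 <= (b xi)^-1.
Proof. by rewrite invr_ge0 ltW ?b_gt0. Qed.

Lemma sqr_c_le_l xi : c ^+ 2 <= l xi.
Proof.
apply: le_trans (ltW c_lt_c1) (le_trans _ (l_lb xi)).
by rewrite ler_peMr ?sqr_ge0// weight_ge1// divr_ge0.
Qed.

Lemma measurable_binv : measurable_fun setT (fun xi => (b xi)^-1).
Proof.
apply: continuous_measurable_fun => x; apply: continuousV; last exact: b_cont.
by rewrite gt_eqF ?b_gt0.
Qed.

Lemma measurable_l_div_b : measurable_fun setT (fun xi => l xi / b xi).
Proof. by apply: measurable_funM; [exact: continuous_measurable_fun|exact: measurable_binv]. Qed.

Lemma binv_le xi : (b xi)^-1 <= c3 ^-2 * (1 + xi ^+ 2) `^ (r / 2).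
Proof.
rewrite -[r / 2]opprK -mulNr powRN -invfM lef_pV2 ?posrE ?b_gt0//.
by rewrite mulr_gt0 ?exprn_gt0 ?powR_gt0// ltr_wpDr ?sqr_ge0.
Qed.

Lemma l_div_b_le xi : l xi / b xi <= c2 ^+ 2 / c3 ^+ 2 * (1 + xi ^+ 2) `^ (s0 r rho).
Proof.
rewrite /s0 (_ : (r + rho) / 2 = rho / 2 + r / 2); last by lra.
rewrite powRD; last by apply/implyP => _; rewrite gt_eqF// ltr_wpDr ?sqr_ge0.
rewrite mulrACA; apply: ler_pM; rewrite ?binv_le ?binv_ge0 ?l_ub//.
exact: ltW (l_gt0 xi).
Qed.

Lemma H_s0_sub (u : R -> R) : H (s0 r rho) u -> H (s0 r rho - rho / 2) u.
Proof. by apply: H_le; rewrite lerBlDr lerDl divr_ge0. Qed.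

Lemma integrable_binv_FTsq (w : R -> R) : H (s0 r rho - rho / 2) w ->
  mu.-integrable setT (EFin \o (fun xi => (b xi)^-1 * FTsq w xi)).
Proof.
rewrite (_ : s0 r rho - rho / 2 = r / 2); last by rewrite /s0; lra.
apply: (integrable_mul_FTsq (C := c3 ^-2) measurable_binv) => xi.
by rewrite binv_ge0 binv_le.
Qed.

Lemma integrable_l_div_b_FTsq (u : R -> R) : H (s0 r rho) u ->
  mu.-integrable setT (EFin \o (fun xi => l xi / b xi * FTsq u xi)).
Proof.
apply: (integrable_mul_FTsq (C := c2 ^+ 2 / c3 ^+ 2) measurable_l_div_b) => xi.
by rewrite l_div_b_le divr_ge0 ?ltW ?l_gt0 ?b_gt0.
Qed.

Lemma integrable_binv_dot (u w : R -> R) :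
  H (s0 r rho - rho / 2) u -> H (s0 r rho - rho / 2) w ->
  mu.-integrable setT (EFin \o (fun xi => (b xi)^-1 *
     (FTre u xi * FTre w xi + FTim u xi * FTim w xi))).
Proof.
move=> uH wH; have uFT := H_FT uH; have wFT := H_FT wH.
have := integrableD_EFin (mu := mu) measurableT
  (integrable_binv_FTsq uH) (integrable_binv_FTsq wH).
apply: le_integrable => //.
  apply/measurable_EFinP; apply: (measurable_funM measurable_binv).
  exact: measurable_funD (measurable_funM (measurable_FTre uFT) (measurable_FTre wFT))
                         (measurable_funM (measurable_FTim uFT) (measurable_FTim wFT)).
move=> xi _ /=; rewrite lee_fin (le_trans _ (ler_norm _))//.
by rewrite -mulrDr normrM ger0_norm ?binv_ge0// ler_wpM2l ?binv_ge0// normr_dot_le.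
Qed.

Lemma symB_sqr xi : symB b xi ^+ 2 = (b xi)^-1.
Proof. by rewrite /symB exprVn sqr_sqrtr// ltW ?b_gt0. Qed.

Lemma symLB_sqr xi : symLB l b xi ^+ 2 = l xi / b xi.
Proof. by rewrite /symLB expr_div_n !sqr_sqrtr// ltW ?b_gt0 ?l_gt0. Qed.

Lemma mult_norm2_symB (f : R -> R) :
  mult_norm2 (symB b) f = (2 * pi)^-1 * Defs.Rint (fun xi => (b xi)^-1 * FTsq f xi).
Proof. by rewrite /mult_norm2; under eq_fun do rewrite symB_sqr. Qed.

Lemma mult_norm2_symLB (f : R -> R) :
  mult_norm2 (symLB l b) f = (2 * pi)^-1 * Defs.Rint (fun xi => l xi / b xi * FTsq f xi).
Proof. by rewrite /mult_norm2; under eq_fun do rewrite symLB_sqr. Qed.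

Lemma mult_pair_symB (f g : R -> R) : mult_pair (symB b) (symB b) f g =
  (2 * pi)^-1 * Defs.Rint (fun xi => (b xi)^-1 * (FTre f xi * FTre g xi + FTim f xi * FTim g xi)).
Proof. by rewrite /mult_pair; under eq_fun do rewrite -expr2 symB_sqr. Qed.

Lemma IcE (u : R -> R) : H (s0 r rho) u ->
  Ic l b c u = (2 * pi)^-1 / 2 * Defs.Rint (fun xi => (l xi - c ^+ 2) / b xi * FTsq u xi).
Proof.
move=> uH; rewrite /Ic mult_norm2_symB mult_norm2_symLB /Defs.Rint.
under [in RHS]eq_Rintegral do rewrite mulrBl mulrBl -[X in _ - X]mulrA.
have binv_int := integrable_binv_FTsq (H_s0_sub uH).
rewrite RintegralB//; last exact: integrableZl_EFin _ measurableT binv_int.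
  by rewrite RintegralZl//; ring.
exact: integrable_l_div_b_FTsq.
Qed.

Lemma Ic_ge0 (u : R -> R) : H (s0 r rho) u -> 0 <= Ic l b c u.
Proof.
move=> uH; rewrite IcE// mulr_ge0 ?divr_ge0 ?invr_ge0 ?mulr_ge0 ?pi_ge0//.
apply: Rintegral_ge0 => x _.
by rewrite mulr_ge0 ?FTsq_ge0// divr_ge0 ?subr_ge0 ?sqr_c_le_l// ltW ?b_gt0.
Qed.

Lemma Rint_binv_sqr_add (u w : R -> R) :
  H (s0 r rho - rho / 2) u -> H (s0 r rho - rho / 2) w ->
  Defs.Rint (fun xi => (b xi)^-1 *
     ((FTre w xi + c * FTre u xi) ^+ 2 + (FTim w xi + c * FTim u xi) ^+ 2)) =
  Defs.Rint (fun xi => (b xi)^-1 * FTsq w xi) +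
  2 * c * Defs.Rint (fun xi => (b xi)^-1 * (FTre u xi * FTre w xi + FTim u xi * FTim w xi)) +
  c ^+ 2 * Defs.Rint (fun xi => (b xi)^-1 * FTsq u xi).
Proof.
move=> uH wH; have wi := integrable_binv_FTsq wH; have ui := integrable_binv_FTsq uH.
have dot_i := integrable_binv_dot uH wH.
have ci := integrableZl_EFin (2 * c) measurableT dot_i.
have c2i := integrableZl_EFin (c ^+ 2) measurableT ui.
rewrite /Defs.Rint -(RintegralZl _ measurableT dot_i) -(RintegralZl _ measurableT ui).
rewrite -(RintegralD measurableT wi ci).
rewrite -(RintegralD measurableT (integrableD_EFin measurableT wi ci) c2i).
apply: eq_Rintegral => xi _; rewrite /FTsq.
move: (FTre w xi) (FTre u xi) (FTim w xi) (FTim u xi) ((b xi)^-1) => A B C D e.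
ring.
Qed.

Lemma Ef_McE (p : R) (u w : R -> R) : H (s0 r rho) u -> H (s0 r rho - rho / 2) w ->
  Ef l b p (u, w) + c * Mf b (u, w) = Ic l b c u - (p + 1)^-1 * Qf p u +
  (2 * pi)^-1 / 2 * Defs.Rint (fun xi => (b xi)^-1 *
     ((FTre w xi + c * FTre u xi) ^+ 2 + (FTim w xi + c * FTim u xi) ^+ 2)).
Proof.
move=> uH wH.
rewrite /Ef /Mf /Ic /Qf !mult_norm2_symB mult_norm2_symLB mult_pair_symB.
exact: complete_square (Rint_binv_sqr_add (H_s0_sub uH) wH).
Qed.

Lemma Ef_Mc_ge (p : R) (u w : R -> R) : H (s0 r rho) u -> H (s0 r rho - rho / 2) w ->
  Ic l b c u - (p + 1)^-1 * Qf p u <= Ef l b p (u, w) + c * Mf b (u, w).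
Proof.
move=> uH wH; rewrite Ef_McE// lerDl mulr_ge0 ?divr_ge0 ?invr_ge0 ?mulr_ge0 ?pi_ge0//.
by apply: Rintegral_ge0 => x _; rewrite mulr_ge0 ?addr_ge0 ?sqr_ge0 ?binv_ge0.
Qed.

Lemma Ef_Mc_antidiag (p : R) (u : R -> R) : H (s0 r rho) u ->
  Ef l b p (u, fun x => - c * u x) + c * Mf b (u, fun x => - c * u x) =
  Ic l b c u - (p + 1)^-1 * Qf p u.
Proof.
move=> uH; have wH := H_s0_sub (H_scale (- c) uH).
have [uFT wFT] := (H_FT uH, H_FT wH).
have [reE imE] := FT_scale_ae (- c) uFT.
have m_sqr (F G : R -> R) : measurable_fun setT F -> measurable_fun setT G ->
    measurable_fun setT (fun xi => (F xi + c * G xi) ^+ 2).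
  move=> mF mG; apply: measurable_funX.
  exact: measurable_funD mF (measurable_funM (measurable_cst c) mG).
rewrite (Ef_McE p uH wH) -[RHS]addr0; congr (_ + _).
rewrite /Defs.Rint (Rintegral_ae_eq (mu := mu) (g := cst 0)).
- by rewrite Rintegral_cst// mul0r mulr0.
- apply: (measurable_funM measurable_binv).
  exact: measurable_funD (m_sqr _ _ (measurable_FTre wFT) (measurable_FTre uFT))
                         (m_sqr _ _ (measurable_FTim wFT) (measurable_FTim uFT)).
- exact: measurable_cst.
- apply: filterS2 reE imE => x /= e1 e2 _.
  by rewrite e1// e2// !mulNr !addNr expr0n /= addr0 mulr0.
Qed.

Lemma Ic_scale (u : R -> R) (k : R) : H (s0 r rho) u ->
  Ic l b c (fun x => k * u x) = k ^+ 2 * Ic l b c u.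
Proof.
move=> uH; have uFT := H_FT uH.
rewrite /Ic !mult_norm2_symB !mult_norm2_symLB.
exact: scale_difference
  (Rint_mul_FTsqZ k measurable_l_div_b uFT (integrable_l_div_b_FTsq uH))
  (Rint_mul_FTsqZ k measurable_binv uFT (integrable_binv_FTsq (H_s0_sub uH))).
Qed.

(* [u / K] is admissible in the infimum defining [m1]. *)
Lemma Ic_ge_m1_scaled (p K : R) (u : R -> R) : 0 < K -> H (s0 r rho) u ->
  Qf p u = K `^ (p + 1) -> K ^+ 2 * m1 l b r rho p c <= Ic l b c u.
Proof.
move=> K_gt0 uH Qu.
have vH := H_scale K^-1 uH.
have Qv : Qf p (fun x => K^-1 * u x) = 1.
  rewrite Qf_scale; last exact: H_measurable uH.
  rewrite Qu ger0_norm ?invr_ge0 ?ltW// -powRM ?invr_ge0 ?ltW//.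
  by rewrite mulVf ?gt_eqF// powR1.
have : m1 l b r rho p c <= Ic l b c (fun x => K^-1 * u x).
  apply: ge_inf; last by exists (fun x => K^-1 * u x).
  by exists 0 => _ [v [v_H _] <-]; exact: Ic_ge0.
rewrite Ic_scale// => /(ler_wpM2l (sqr_ge0 K)).
by rewrite mulrA -exprMn mulfV ?gt_eqF// expr1n mul1r.
Qed.

Lemma calGc_constrained_minimizer (p : R) Phi : 1 < p -> calGc l b r rho p c Phi ->
  let q := 2 `^ ((p + 1) / (p - 1)) * m1 l b r rho p c `^ ((p + 1) / (p - 1)) in
  [/\ inX r rho Phi, Qf p Phi.1 = q &
      forall U, inX r rho U -> Qf p U.1 = q ->
        Ef l b p Phi + c * Mf b Phi <= Ef l b p U + c * Mf b U].
Proof.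
move=> p_gt1 [_ [psi [psiH Qpsi Icpsi ->]] ->] q.
set m := m1 l b r rho p c in Icpsi q *; set K := (2 * m) `^ (p - 1)^-1.
have m_ge0 : 0 <= m by rewrite -Icpsi Ic_ge0.
have phiH : H (s0 r rho) (fun x => K * psi x) by exact: H_scale.
have QK : K `^ (p + 1) = q by rewrite /q /K -powRrM (mulrC (p - 1)^-1) powRM.
have Qphi : Qf p (fun x => K * psi x) = q.
  rewrite Qf_scale; last exact: H_measurable psiH.
  by rewrite Qpsi mulr1 ger0_norm; [exact: QK|exact: powR_ge0].
split; [by split; [exact: phiH|exact: H_s0_sub (H_scale _ phiH)]|exact: Qphi|].
move=> [u w] [/= uH wH] /= Qu.
rewrite (Ef_Mc_antidiag p phiH); apply: le_trans (Ef_Mc_ge p uH wH).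
rewrite Qphi -Qu lerD2r (Ic_scale K psiH) Icpsi.
have [->|m_neq0] := eqVneq m 0; first by rewrite mulr0; exact: Ic_ge0 uH.
apply: (Ic_ge_m1_scaled _ uH); last by rewrite QK.
by rewrite powR_gt0// mulr_gt0// lt_neqAle eq_sym m_neq0.
Qed.

End traveling_waves.

Theorem lemma4p2 (R : realType) (l b : R -> R) (rho r p c c1 c2 c3 c4 : R) :
  0 <= rho -> 0 <= r -> 1 <= r + rho / 2 -> 1 < p ->
  symbol_of_order l rho -> symbol_of_order b (- r) ->
  best_lower l (fun xi => (1 + xi ^+ 2) `^ (rho / 2)) c1 ->
  best_upper l (fun xi => (1 + xi ^+ 2) `^ (rho / 2)) c2 ->
  best_lower b (fun xi => (1 + xi ^+ 2) `^ (- r / 2)) c3 ->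
  best_upper b (fun xi => (1 + xi ^+ 2) `^ (- r / 2)) c4 ->
  c ^+ 2 < c1 ^+ 2 ->
  forall Phi, calGc l b r rho p c Phi ->
    [/\ inX r rho Phi,
        Qf p Phi.1 = 2 `^ ((p + 1) / (p - 1)) * m1 l b r rho p c `^ ((p + 1) / (p - 1)) &
        forall U, inX r rho U ->
          Qf p U.1 = 2 `^ ((p + 1) / (p - 1)) * m1 l b r rho p c `^ ((p + 1) / (p - 1)) ->
          Ef l b p Phi + c * Mf b Phi <= Ef l b p U + c * Mf b U].
Proof.
move=> rho_ge0 _ _ p_gt1 l_sym b_sym [c1_gt0 [l_lb _]] [_ [l_ub _]] [c3_gt0 [b_lb _]] _.
move=> c_lt_c1 Phi.
exact: (calGc_constrained_minimizer rho_ge0 (continuous_symbol l_sym)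
  (continuous_symbol b_sym) c1_gt0 l_lb l_ub c3_gt0 b_lb c_lt_c1 p_gt1).
Qed.
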